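(* Let $R$ be a ring and $G$ a group such that the group ring $RG$ is a DT ring. Then $1-g^2\in\Delta(RG)$ for every $g\in G$.
   Context: All rings are associative with identity; $U(R)$ is the group of units. $\Delta(R)=\{x\in R: x+u\in U(R)\text{ for all }u\in U(R)\}$. $\mathrm{Tr}(R)=\{x\in R: x^3=x\}$. A ring $R$ is a DT ring if every $r\in R$ can be written $r=e+d$ with $e\in\mathrm{Tr}(R)$ and $d\in\Delta(R)$. $RG$ denotes the group ring. *)

(* The group ring RG of an arbitrary (possibly infinite,
   possibly non-abelian) group G over an arbitrary ring R is defined as the
   finitely supported functions G -> R (finmap's fsfun with default 0), with
   the usual convolution product. *)
From HB Require Import structures.
From mathcomp Require Import all_boot all_order all_algebra.
From mathcomp Require Import finmap.
Set Implicit Arguments. Unset Strict Implicit. Unset Printing Implicit Defensive.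
Import GRing.Theory.
Local Open Scope ring_scope.
Local Open Scope fset_scope.

Section GroupRing.
Variables (R : pzRingType) (G : groupType).

Definition grpring := {fsfun G -> R with 0}.

Definition gr_add (a b : grpring) : grpring :=
  [fsfun g in finsupp a `|` finsupp b => (a g + b g)%R].

Definition gr_opp (a : grpring) : grpring :=
  [fsfun g in finsupp a => (- a g)%R].

(* (a b)(x) = sum_{g h = x} a(g) b(h) = sum_{g in supp a} a(g) b(g^-1 x) *)
Definition gr_mul (a b : grpring) : grpring :=
  [fsfun x in [fset (g * h)%g | g in finsupp a, h in finsupp b] =>
     (\sum_(g <- finsupp a) a g * b (g^-1 * x)%g)%R].

Definition gr_of (r : R) (g : G) : grpring :=
  [fsfun x in [fset g] => if x == g then r else 0].

Definition gr_one : grpring := gr_of 1 1%g.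

Definition gr_sub (a b : grpring) : grpring := gr_add a (gr_opp b).

Definition gr_unit (u : grpring) : Prop :=
  exists v, gr_mul u v = gr_one /\ gr_mul v u = gr_one.

Definition gr_Delta (x : grpring) : Prop :=
  forall u, gr_unit u -> gr_unit (gr_add x u).

Definition gr_Tr (x : grpring) : Prop := gr_mul x (gr_mul x x) = x.

Definition gr_DT : Prop :=
  forall r : grpring, exists e d, gr_Tr e /\ gr_Delta d /\ r = gr_add e d.

End GroupRing.

(* A DT decomposition g = e + d of a unit g forces e = g - d to be a unit,
   hence e^2 = 1 from e^3 = e.  Then g^2 = g (e + d) = (e + d) e + g d
   = 1 + d e + g d, and both d e and g d lie in Delta because Delta is
   stable under multiplication by units on either side.  In RG every group
   element is a unit, so 1 - g^2 lies in Delta. *)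
From HB Require Import structures.
From mathcomp Require Import all_boot all_order all_algebra.
From mathcomp Require Import finmap.
Set Implicit Arguments. Unset Strict Implicit. Unset Printing Implicit Defensive.
Import GRing.Theory.
Local Open Scope fset_scope.
Local Open Scope ring_scope.

Section Delta.
Variable T : pzRingType.
Implicit Types u v x y e d g : T.

Definition invertible u := exists v, u * v = 1 /\ v * u = 1.

Definition Delta x := forall u, invertible u -> invertible (x + u).

Lemma invertibleM u v : invertible u -> invertible v -> invertible (u * v).
Proof.
move=> [u' [uu' u'u]] [v' [vv' v'v]]; exists (v' * u'); split.
  by rewrite mulrA -(mulrA u) vv' mulr1.
by rewrite mulrA -(mulrA v') u'u mulr1.
Qed.

Lemma invertibleN u : invertible u -> invertible (- u).
Proof. by move=> [v [uv vu]]; exists (- v); rewrite !mulrNN. Qed.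

Lemma DeltaN x : Delta x -> Delta (- x).
Proof.
move=> Dx u /invertibleN /Dx /invertibleN.
by rewrite opprD opprK.
Qed.

Lemma DeltaD x y : Delta x -> Delta y -> Delta (x + y).
Proof. by move=> Dx Dy u /Dy /Dx; rewrite addrA. Qed.

Lemma DeltaMl v x : invertible v -> Delta x -> Delta (v * x).
Proof.
move=> [w [vw wv]] Dx u iu.
have iw : invertible w by exists v.
have -> : v * x + u = v * (x + w * u) by rewrite mulrDr mulrA vw mul1r.
by apply: invertibleM; [exists w | apply/Dx/invertibleM].
Qed.

Lemma DeltaMr v x : invertible v -> Delta x -> Delta (x * v).
Proof.
move=> [w [vw wv]] Dx u iu.
have iw : invertible w by exists v.
have -> : x * v + u = (x + u * w) * v by rewrite mulrDl -mulrA wv mulr1.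
by apply: invertibleM; [apply/Dx/invertibleM | exists w].
Qed.

Lemma tripotent_invertible_sqr e : e * (e * e) = e -> invertible e -> e * e = 1.
Proof. by move=> e3 [w [_ we]]; rewrite -[e * e]mul1r -we -mulrA e3. Qed.

Lemma Delta_1_sub_sqr g e d :
  invertible g -> e * (e * e) = e -> Delta d -> g = e + d -> Delta (1 - g * g).
Proof.
move=> ig e3 Dd gE.
have ie : invertible e.
  have -> : e = - d + g by rewrite gE addrC addrK.
  exact: DeltaN.
have ee1 := tripotent_invertible_sqr e3 ie.
have -> : 1 - g * g = - (d * e + g * d).
  by rewrite {2}gE mulrDr {1}gE mulrDl ee1 -addrA opprD addrA subrr add0r.
by apply/DeltaN/DeltaD; [apply: DeltaMr | apply: DeltaMl].
Qed.

End Delta.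

Lemma big_fset_pred1 (I : choiceType) (V : nmodType) (A : {fset I}) (y : I)
    (F : I -> V) :
  (y \notin A -> F y = 0) -> \sum_(h <- A) (if h == y then F h else 0) = F y.
Proof.
move=> Fy; have [yA | yNA] := boolP (y \in A).
  rewrite (big_fsetD1 y yA) /= eqxx big1_fset ?addr0 // => h.
  by rewrite !inE => /andP[/negPf ->].
rewrite Fy // big1_fset // => h hA _; case: eqP => // hy.
by rewrite -hy hA in yNA.
Qed.

Section GroupRingCoefficients.
Variables (R : pzRingType) (G : groupType).
Implicit Types (a b c : grpring R G) (A B : {fset G}) (g h x : G).

Lemma gr_addE a b x : gr_add a b x = a x + b x.
Proof.
rewrite /gr_add fsfun_fun inE.
by case: finsuppP => _; case: finsuppP => //= _; rewrite addr0.
Qed.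

Lemma gr_oppE a x : gr_opp a x = - a x.
Proof. by rewrite /gr_opp fsfun_fun; case: finsuppP => //; rewrite oppr0. Qed.

Lemma gr_ofE (r : R) g x : gr_of r g x = if x == g then r else 0.
Proof. by rewrite /gr_of fsfun_fun inE; case: eqP. Qed.

Lemma finsupp_gr_of (r : R) g : finsupp (gr_of r g) `<=` [fset g].
Proof.
apply/fsubsetP => y; rewrite mem_finsupp gr_ofE inE.
by case: (y == g); rewrite ?eqxx.
Qed.

Lemma eq_mulVg g h x : (h == g^-1 * x)%g = (x == g * h)%g.
Proof. by apply/eqP/eqP => [->|->]; rewrite ?mulVKg ?mulKg. Qed.

Lemma gr_mulEl a b A x : finsupp a `<=` A ->
  gr_mul a b x = \sum_(g <- A) a g * b (g^-1 * x)%g.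
Proof.
move=> aA; rewrite -(big_fset_incl _ aA); last first.
  by move=> g _ /fsfun_dflt ->; rewrite mul0r.
rewrite /gr_mul fsfun_fun; case: ifPn => // xNab.
rewrite big1_fset // => g ag _; case: (finsuppP b (g^-1 * x)%g) => [|bgx].
  by rewrite mulr0.
case/negP: xNab; apply/imfset2P; exists g => //; exists (g^-1 * x)%g => //.
by rewrite mulVKg.
Qed.

Lemma gr_mulEr a b B x : finsupp b `<=` B ->
  gr_mul a b x = \sum_(h <- B) a (x * h^-1)%g * b h.
Proof.
move=> bB; have suppN c y : y \notin finsupp c -> c y = 0 by move/fsfun_dflt.
rewrite (gr_mulEl _ _ (fsubset_refl _)).
(* Both sides collapse the double sum over the pairs (g, h) with g h = x. *)
transitivity (\sum_(g <- finsupp a) \sum_(h <- B)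
                (if h == (g^-1 * x)%g then a g * b h else 0)).
  apply: eq_bigr => g _; rewrite big_fset_pred1 // => gxNB.
  by rewrite (suppN b) ?mulr0 //; apply: contra gxNB; apply: (fsubsetP bB).
rewrite exchange_big /=; apply: eq_bigr => h _.
rewrite -[RHS](@big_fset_pred1 G R (finsupp a) (x * h^-1)%g (fun g => a g * b h)).
  by apply: eq_bigr => g _; rewrite eq_mulVg -divg_eq eq_sym.
by move/suppN ->; rewrite mul0r.
Qed.

Lemma gr_mulA : associative (@gr_mul R G).
Proof.
move=> a b c; apply/fsfunP => x.
rewrite (gr_mulEr _ _ (fsubset_refl (finsupp c))).
rewrite (gr_mulEl _ _ (fsubset_refl (finsupp a))).
under [RHS]eq_bigr do rewrite (gr_mulEl _ _ (fsubset_refl (finsupp a))) mulr_suml.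
rewrite [RHS]exchange_big /=; apply: eq_bigr => g _.
rewrite (gr_mulEr _ _ (fsubset_refl (finsupp c))) mulr_sumr.
by apply: eq_bigr => h _; rewrite mulgA mulrA.
Qed.

Lemma gr_of_mul (r s : R) g h : gr_mul (gr_of r g) (gr_of s h) = gr_of (r * s) (g * h)%g.
Proof.
apply/fsfunP => x; rewrite (gr_mulEl _ _ (finsupp_gr_of _ _)) big_seq_fset1.
by rewrite !gr_ofE eqxx eq_sym eq_mulVg; case: ifP; rewrite ?mulr0.
Qed.

End GroupRingCoefficients.

Section GroupRingStructure.
Variables (R : pzRingType) (G : groupType).

Let gr_zero : grpring R G := gr_of 0 1%g.

Let gr_zeroE x : gr_zero x = 0.
Proof. by rewrite gr_ofE if_same. Qed.

Let gr_addA : associative (@gr_add R G).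
Proof. by move=> a b c; apply/fsfunP => x; rewrite !gr_addE addrA. Qed.

Let gr_addC : commutative (@gr_add R G).
Proof. by move=> a b; apply/fsfunP => x; rewrite !gr_addE addrC. Qed.

Let gr_add0 : left_id gr_zero (@gr_add R G).
Proof. by move=> a; apply/fsfunP => x; rewrite gr_addE gr_zeroE add0r. Qed.

Let gr_addN : left_inverse gr_zero (@gr_opp R G) (@gr_add R G).
Proof. by move=> a; apply/fsfunP => x; rewrite gr_addE gr_oppE gr_zeroE addNr. Qed.

Let gr_mul1 : left_id (gr_one R G) (@gr_mul R G).
Proof.
move=> a; apply/fsfunP => x.
by rewrite (gr_mulEl _ _ (finsupp_gr_of _ _)) big_seq_fset1 gr_ofE eqxx mul1r invg1 mul1g.
Qed.

Let gr_mul1r : right_id (gr_one R G) (@gr_mul R G).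
Proof.
move=> a; apply/fsfunP => x.
by rewrite (gr_mulEr _ _ (finsupp_gr_of _ _)) big_seq_fset1 gr_ofE eqxx mulr1 invg1 mulg1.
Qed.

Let gr_mulDl : left_distributive (@gr_mul R G) (@gr_add R G).
Proof.
move=> a b c; apply/fsfunP => x; rewrite gr_addE.
rewrite !(gr_mulEr _ _ (fsubset_refl (finsupp c))) -big_split.
by apply: eq_bigr => h _; rewrite gr_addE mulrDl.
Qed.

Let gr_mulDr : right_distributive (@gr_mul R G) (@gr_add R G).
Proof.
move=> a b c; apply/fsfunP => x; rewrite gr_addE.
rewrite !(gr_mulEl _ _ (fsubset_refl (finsupp a))) -big_split.
by apply: eq_bigr => g _; rewrite gr_addE mulrDr.
Qed.

HB.instance Definition _ := Choice.copy (grpring R G) {fsfun G -> R with 0}.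
HB.instance Definition _ := GRing.isZmodule.Build (grpring R G)
  gr_addA gr_addC gr_add0 gr_addN.
HB.instance Definition _ := GRing.Zmodule_isPzRing.Build (grpring R G)
  (@gr_mulA R G) gr_mul1 gr_mul1r gr_mulDl gr_mulDr.

Lemma gr_of1_invertible (g : G) : invertible (gr_of (1 : R) g : grpring R G).
Proof.
exists (gr_of 1 g^-1)%g.
by rewrite /GRing.mul /= !gr_of_mul mulr1 mulgV mulVg.
Qed.

End GroupRingStructure.

Theorem lemma3p7 (R : pzRingType) (G : groupType) :
  gr_DT R G ->
  forall g : G, gr_Delta (gr_sub (gr_one R G) (gr_of 1%R (g * g)%g)).
Proof.
move=> DT g; have [e [d [e3 [Dd gE]]]] := DT (gr_of 1 g).
have := Delta_1_sub_sqr (gr_of1_invertible R g) e3 Dd gE.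
by rewrite /GRing.mul /= gr_of_mul mulr1.
Qed.
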